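(* Let $X_0, \dots, X_{T-1}$ be a binary sequence decomposing into alternating blocks $1^{L_1}0^{G_1}\cdots 1^{L_m}0^{G_m}$, with $\rho = T^{-1}\sum_t X_t$ and $q = m/T$. For a word $w \in \{0,1\}^\ell$ let $\nu(w) = \frac{1}{T-\ell+1}\sum_{t=0}^{T-\ell}\prod_{j=0}^{\ell-1}\mathbf{1}[X_{t+j} = w_j]$. Then there are fixed affine-linear functions $F_w$ ($w \in \{0,1\}^4$), independent of the sequence, such that for every $w \in \{0,1\}^4$, \[ \nu(w) = F_w\bigl(\rho, q, \nu(000), \nu(010), \nu(0000), \nu(0010), \nu(0100), \nu(0110)\bigr) + o(1) \] as $T \to \infty$. That is, beyond the depth-$4$ parameters $(\rho, q, \nu(000), \nu(010))$, the sixteen $4$-word frequencies involve exactly the four new free parameters $\nu(0000), \nu(0010), \nu(0100), \nu(0110)$, for a total of $8$ parameters through depth $5$. *)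

From HB Require Import structures.
From mathcomp Require Import all_boot all_order all_algebra.
From mathcomp Require Export reals.
Set Implicit Arguments. Unset Strict Implicit. Unset Printing Implicit Defensive.
Import Order.TTheory GRing.Theory Num.Theory.
Local Open Scope ring_scope.

Definition blockseq (s : seq (nat * nat)) : seq bool :=
  flatten [seq nseq p.1 true ++ nseq p.2 false | p <- s].

Definition valid_blocks (s : seq (nat * nat)) : bool :=
  all (fun p => (0 < p.1)%N && (0 < p.2)%N) s.

Section Freq.
Variable R : realType.

Definition rho (X : seq bool) : R := (count id X)%:R / (size X)%:R.

Definition nu (X : seq bool) (w : seq bool) : R :=
  (\sum_(0 <= t < (size X - size w).+1)
      \prod_(j < size w) ((nth false X (t + j) == nth false w j)%:R : R))
  / ((size X - size w).+1)%:R.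

Definition params (s : seq (nat * nat)) : 'I_8 -> R := fun i =>
  let X := blockseq s in
  nth 0 [:: rho X; (size s)%:R / (size X)%:R;
            nu X [:: false; false; false]; nu X [:: false; true; false];
            nu X [:: false; false; false; false]; nu X [:: false; false; true; false];
            nu X [:: false; true; false; false]; nu X [:: false; true; true; false]] i.

Definition affine8 (b : R) (a : 'I_8 -> R) (x : 'I_8 -> R) : R :=
  b + \sum_(i < 8) a i * x i.
End Freq.

From HB Require Import structures.
From mathcomp Require Import all_boot all_order all_algebra reals.
From mathcomp Require Import zify ring lra.
Set Implicit Arguments. Unset Strict Implicit. Unset Printing Implicit Defensive.
Import Order.TTheory GRing.Theory Num.Theory.
Local Open Scope ring_scope.

(* Let c(w) be the number of occurrences of the word w in X, so that
   nu(w) = c(w) / (T - |w| + 1).  Every occurrence of w but the last (resp. the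
   first) extends by one letter to the right (resp. left), hence
   c(w) = c(w0) + c(w1) + O(1) = c(0w) + c(1w) + O(1).  For any word v this gives
     c(0v1) = c(0v) - c(0v0),   c(1v0) = c(v0) - c(0v0),
     c(1v1) = c(1v) - c(v0) + c(0v0)                       up to O(1),
   so from length 3 on, the counts of the words of length n + 1 are determined by
   those of length n and by the counts of the words 0v0.  In lengths 1 and 2,
   c(0) = T - c(1) + O(1) and c(10) is the number m of blocks.  Unfolding,
   c(w) = T F_w + O(1) for |w| = 4, and dividing by T - 3 turns the O(1) count
   errors into O(1/T) frequency errors. *)

Fixpoint descents (X : seq bool) : nat :=
  if X is x :: ((y :: _) as X') then (x && ~~ y) + descents X' else 0.

Lemma blockseq_cons p s :
  blockseq (p :: s) = nseq p.1 true ++ nseq p.2 false ++ blockseq s.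
Proof. by rewrite /blockseq /= catA. Qed.

Lemma descents_blockseq s : valid_blocks s -> descents (blockseq s) = size s.
Proof.
have descents_ones n r : descents (nseq n.+1 true ++ false :: r) = (descents (false :: r)).+1.
  by elim: n => //= n ->.
have descents_zeros n r : descents (false :: nseq n false ++ r) = descents (false :: r).
  by elim: n.
elim: s => // [[L G]] s IH /andP[/andP[/= L_gt0 G_gt0] valid_s].
rewrite blockseq_cons; case: L L_gt0 => // L _; case: G G_gt0 => // G _.
rewrite descents_ones descents_zeros -(IH valid_s); congr S.
by case: s valid_s {IH} => // [[[|L'] G']] s.
Qed.

Section Frequencies.
Variable R : realType.
Implicit Types (X u v w : seq bool) (t : nat).

Definition occurs_at X w t : R :=
  \prod_(j < size w) (nth false X (t + j) == nth false w j)%:R.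

Definition count_word X w : R :=
  \sum_(0 <= t < (size X - size w).+1) occurs_at X w t.

Lemma nuE X w : nu R X w = count_word X w / ((size X - size w).+1)%:R.
Proof. by []. Qed.

Lemma occurs_at_01 X w t : 0 <= occurs_at X w t <= 1.
Proof.
by apply/andP; split; [apply: prodr_ge0 | apply: prodr_ile1] => j _;
  case: eqP; rewrite ?lexx ?ler01.
Qed.

Lemma count_word_ge0 X w : 0 <= count_word X w.
Proof. by apply: sumr_ge0 => t _; case/andP: (occurs_at_01 X w t). Qed.

Lemma count_word_le X w : count_word X w <= ((size X - size w).+1)%:R.
Proof.
rewrite -[X in X%:R]subn0 -sumr_const_nat.
by apply: ler_sum => t _; case/andP: (occurs_at_01 X w t).
Qed.

Lemma count_word_nil X : count_word X [::] = ((size X).+1)%:R.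
Proof.
rewrite /count_word subn0 (eq_bigr (fun _ => 1)) => [|t _]; last exact: big_ord0.
by rewrite sumr_const_nat subn0.
Qed.

Lemma count_word_seq_cons x X w : (size w <= size X)%N ->
  count_word (x :: X) w = occurs_at (x :: X) w 0 + count_word X w.
Proof. by move=> le_wX; rewrite /count_word /= subSn // big_nat_recl. Qed.

Lemma count_word_rcons X w : (size w < size X)%N ->
  count_word X w = count_word X (rcons w false) + count_word X (rcons w true)
                   + occurs_at X w (size X - size w).
Proof.
move=> lt_wX; rewrite /count_word !size_rcons.
have -> : (size X - size w = (size X - (size w).+1).+1)%N by lia.
rewrite big_nat_recr //= -big_split /=; congr (_ + _).
apply: eq_bigr => t _; rewrite /occurs_at !size_rcons !big_ord_recr /= !nth_rcons ltnn eqxx.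
have prefix b : \prod_(j < size w) ((nth false X (t + widen_ord (leqnSn _) j) ==
      nth false (rcons w b) (widen_ord (leqnSn _) j))%:R : R)
   = \prod_(j < size w) (nth false X (t + j) == nth false w j)%:R.
  by apply: eq_bigr => j _; rewrite nth_rcons /= ltn_ord.
rewrite !prefix -mulrDr.
by case: (nth false X (t + size w)); rewrite /= ?addr0 ?add0r mulr1.
Qed.

Lemma count_word_cons X w : (size w < size X)%N ->
  count_word X w = occurs_at X w 0 + count_word X (false :: w)
                   + count_word X (true :: w).
Proof.
move=> lt_wX; rewrite /count_word /=.
have -> : (size X - size w = (size X - (size w).+1).+1)%N by lia.
rewrite big_nat_recl //= -addrA -big_split /=; congr (_ + _).
apply: eq_bigr => t _; rewrite /occurs_at /= !big_ord_recl /= addn0 -mulrDl.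
have -> : \prod_(i < size w) ((nth false X (t + bump 0 i) == nth false w (0 + i))%:R : R)
   = \prod_(j < size w) (nth false X (t.+1 + j) == nth false w j)%:R.
  by apply: eq_bigr => j _; rewrite /bump /= add1n add0n addnS addSn.
by case: (nth false X t); rewrite /= ?addr0 ?add0r mul1r.
Qed.

Lemma count_word_rcons_bounds X w : (size w < size X)%N ->
  count_word X (rcons w false) + count_word X (rcons w true) <= count_word X w
  <= count_word X (rcons w false) + count_word X (rcons w true) + 1.
Proof.
move=> lt_wX; rewrite (count_word_rcons lt_wX).
by have /andP[? ?] := occurs_at_01 X w (size X - size w); apply/andP; split; lra.
Qed.

Lemma count_word_cons_bounds X w : (size w < size X)%N ->
  count_word X (false :: w) + count_word X (true :: w) <= count_word X w
  <= count_word X (false :: w) + count_word X (true :: w) + 1.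
Proof.
move=> lt_wX; rewrite (count_word_cons lt_wX).
by have /andP[? ?] := occurs_at_01 X w 0; apply/andP; split; lra.
Qed.

Lemma count_word_true X : (0 < size X)%N -> count_word X [:: true] = (count id X)%:R.
Proof.
elim: X => // x X IH _; case: X IH => [|y X] IH.
  by rewrite /count_word /occurs_at /= big_nat1 big_ord1 /=; case: x.
by rewrite count_word_seq_cons // IH //= !natrD /occurs_at big_ord1; case: x.
Qed.

Lemma count_word_true_false X : (1 < size X)%N ->
  count_word X [:: true; false] = (descents X)%:R.
Proof.
have head_occ x y X' : occurs_at (x :: y :: X') [:: true; false] 0 = (x && ~~ y)%:R.
  by rewrite /occurs_at !big_ord_recr big_ord0 /= mul1r; case: x; case: y; rewrite ?mulr1 ?mulr0.
elim: X => // x X IH; case: X IH => // y X IH _; case: X IH => [|z X] IH.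
  by rewrite /count_word subnn big_nat1 head_occ /= addn0.
by rewrite count_word_seq_cons // IH // head_occ -natrD.
Qed.

Definition param_words : seq (seq bool) :=
  [:: [:: true]; [:: true; false];
      [:: false; false; false]; [:: false; true; false];
      [:: false; false; false; false]; [:: false; false; true; false];
      [:: false; true; false; false]; [:: false; true; true; false]].

(* The numerators of [params]; by [descents_blockseq], the second one counts blocks. *)
Definition param_counts X (i : 'I_8) : R := count_word X (nth [::] param_words i).

(* The rows of length 3 and 4 are obtained from the shorter ones by the three
   relations recalled at the top. *)
Definition affine_coefs (w : seq bool) : R * seq R :=
  match w with
  | [:: false] => (1, [:: -1; 0; 0; 0; 0; 0; 0; 0])
  | [:: true] => (0, [:: 1; 0; 0; 0; 0; 0; 0; 0])
  | [:: false; false] => (1, [:: -1; -1; 0; 0; 0; 0; 0; 0])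
  | [:: false; true] => (0, [:: 0; 1; 0; 0; 0; 0; 0; 0])
  | [:: true; false] => (0, [:: 0; 1; 0; 0; 0; 0; 0; 0])
  | [:: true; true] => (0, [:: 1; -1; 0; 0; 0; 0; 0; 0])
  | [:: false; false; false] => (0, [:: 0; 0; 1; 0; 0; 0; 0; 0])
  | [:: false; false; true] => (1, [:: -1; -1; -1; 0; 0; 0; 0; 0])
  | [:: false; true; false] => (0, [:: 0; 0; 0; 1; 0; 0; 0; 0])
  | [:: false; true; true] => (0, [:: 0; 1; 0; -1; 0; 0; 0; 0])
  | [:: true; false; false] => (1, [:: -1; -1; -1; 0; 0; 0; 0; 0])
  | [:: true; false; true] => (-1, [:: 1; 2; 1; 0; 0; 0; 0; 0])
  | [:: true; true; false] => (0, [:: 0; 1; 0; -1; 0; 0; 0; 0])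
  | [:: true; true; true] => (0, [:: 1; -2; 0; 1; 0; 0; 0; 0])
  | [:: false; false; false; false] => (0, [:: 0; 0; 0; 0; 1; 0; 0; 0])
  | [:: false; false; false; true] => (0, [:: 0; 0; 1; 0; -1; 0; 0; 0])
  | [:: false; false; true; false] => (0, [:: 0; 0; 0; 0; 0; 1; 0; 0])
  | [:: false; false; true; true] => (1, [:: -1; -1; -1; 0; 0; -1; 0; 0])
  | [:: false; true; false; false] => (0, [:: 0; 0; 0; 0; 0; 0; 1; 0])
  | [:: false; true; false; true] => (0, [:: 0; 0; 0; 1; 0; 0; -1; 0])
  | [:: false; true; true; false] => (0, [:: 0; 0; 0; 0; 0; 0; 0; 1])
  | [:: false; true; true; true] => (0, [:: 0; 1; 0; -1; 0; 0; 0; -1])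
  | [:: true; false; false; false] => (0, [:: 0; 0; 1; 0; -1; 0; 0; 0])
  | [:: true; false; false; true] => (1, [:: -1; -1; -2; 0; 1; 0; 0; 0])
  | [:: true; false; true; false] => (0, [:: 0; 0; 0; 1; 0; -1; 0; 0])
  | [:: true; false; true; true] => (-1, [:: 1; 2; 1; -1; 0; 1; 0; 0])
  | [:: true; true; false; false] => (1, [:: -1; -1; -1; 0; 0; 0; -1; 0])
  | [:: true; true; false; true] => (-1, [:: 1; 2; 1; -1; 0; 0; 1; 0])
  | [:: true; true; true; false] => (0, [:: 0; 1; 0; -1; 0; 0; 0; -1])
  | [:: true; true; true; true] => (0, [:: 1; -3; 0; 2; 0; 0; 0; 1])
  | _ => (0, [::])
  end.

Definition count_estimate X (w : seq bool) : R :=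
  (affine_coefs w).1 * (size X)%:R
  + \sum_(i < 8) nth 0 (affine_coefs w).2 i * param_counts X i.

Lemma count_estimate_close2 X u : (2 <= size X)%N -> size u = 2 ->
  `|count_word X u - count_estimate X u| <= 4.
Proof.
move=> le2X size_u.
have lt_X v : (size v <= 1)%N -> (size v < size X)%N by move=> ?; apply: leq_ltn_trans le2X.
have := count_word_nil X; rewrite -natr1.
have /andP[? ?] := count_word_rcons_bounds (lt_X [::] isT).
have /andP[? ?] := count_word_rcons_bounds (lt_X [:: false] isT).
have /andP[? ?] := count_word_rcons_bounds (lt_X [:: true] isT).
have /andP[? ?] := count_word_cons_bounds (lt_X [:: true] isT).
case: u size_u => [|a [|d [|]]] //= _.
rewrite /count_estimate !big_ord_recl big_ord0 /param_counts /=.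
by case: a; case: d => /= ?; rewrite ler_norml; apply/andP; split; lra.
Qed.

(* [0v0] is one of the parameter words exactly when [1 <= size v <= 2]. *)
Lemma count_estimate_close_step X K v : (size v + 2 <= size X)%N -> (0 < size v <= 2)%N ->
  (forall u, size u = (size v).+1 -> `|count_word X u - count_estimate X u| <= K) ->
  forall a d, `|count_word X (a :: rcons v d) - count_estimate X (a :: rcons v d)|
              <= 2 * K + 2.
Proof.
move=> le_vX size_v est_v a d.
have lt_X u : size u = (size v).+1 -> (size u < size X)%N.
  by move=> ->; lia.
have size_rconsv : size (rcons v false) = (size v).+1 by rewrite size_rcons.
move: (count_word_rcons_bounds (lt_X (a :: v) erefl))
  (count_word_cons_bounds (lt_X _ size_rconsv))
  (est_v (a :: v) erefl) (est_v _ size_rconsv); rewrite !ler_norml.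
case: v size_v {le_vX est_v lt_X size_rconsv} => [|b [|c [|]]] //= _;
  rewrite /count_estimate !big_ord_recl !big_ord0 /param_counts /=;
  by case: a; case: d; case: b; try case: c;
     move=> /= /andP[? ?] /andP[? ?] /andP[? ?] /andP[? ?]; apply/andP; split; lra.
Qed.

Lemma count_estimate_close3 X u : (3 <= size X)%N -> size u = 3 ->
  `|count_word X u - count_estimate X u| <= 10.
Proof.
move=> le3X; case: u => [|a [|b [|d [|]]]] // _.
have est2 u : size u = 2 -> `|count_word X u - count_estimate X u| <= 4.
  by apply: count_estimate_close2; apply: ltnW.
by have := count_estimate_close_step (v := [:: b]) le3X isT est2 a d; rewrite /=; lra.
Qed.

Lemma count_estimate_close4 X u : (4 <= size X)%N -> size u = 4 ->
  `|count_word X u - count_estimate X u| <= 22.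
Proof.
move=> le4X; case: u => [|a [|b [|c [|d [|]]]]] // _.
have est3 u : size u = 3 -> `|count_word X u - count_estimate X u| <= 10.
  by apply: count_estimate_close3; apply: ltnW.
by have := count_estimate_close_step (v := [:: b; c]) le4X isT est3 a d; rewrite /=; lra.
Qed.

Lemma dist_div_div_le (x D N d : R) : 0 < N -> 0 <= x <= D -> N <= D <= N + d ->
  `|x / N - x / D| <= d / N.
Proof.
move=> N_gt0 /andP[x_ge0 x_le] /andP[N_le D_le].
have D_gt0 : 0 < D by apply: lt_le_trans N_le.
have r_ge0 : 0 <= x / D by rewrite divr_ge0 // ltW.
have r_le1 : x / D <= 1 by rewrite ler_pdivrMr // mul1r.
have -> : x / N - x / D = x / D * (D - N) / N.
  by field; rewrite !gt_eqF.
have DN_ge0 : 0 <= D - N by rewrite subr_ge0.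
rewrite ger0_norm ?(divr_ge0 (mulr_ge0 r_ge0 DN_ge0) (ltW N_gt0)) // ler_pM2r ?invr_gt0 //.
have : x / D * (D - N) <= 1 * (D - N) by rewrite ler_wpM2r // subr_ge0.
lra.
Qed.

Lemma affine_rescale n (T d K y c0 : R) (c x p : 'I_n -> R) :
  0 < T - d -> 0 <= d -> (forall i, `|x i / (T - d) - p i| <= d / (T - d)) ->
  `|y - (c0 * T + \sum_i c i * x i)| <= K ->
  `|y / (T - d) - (c0 + \sum_i c i * p i)|
    <= (K + d * (`|c0| + \sum_i `|c i|)) / (T - d).
Proof.
move=> N_gt0 d_ge0 x_close y_close; set N := T - d in N_gt0 x_close *.
set e := y - (c0 * T + \sum_i c i * x i) in y_close *.
have split_sum : \sum_i c i * (x i / N - p i) = (\sum_i c i * x i) / N - \sum_i c i * p i.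
  by rewrite mulr_suml -sumrB; apply: eq_bigr => i _; ring.
have -> : y / N - (c0 + \sum_i c i * p i) = e / N + c0 * (d / N) + \sum_i c i * (x i / N - p i).
  by rewrite split_sum /e /N; field; rewrite gt_eqF.
have sum_le : `|\sum_i c i * (x i / N - p i)| <= (\sum_i `|c i|) * (d / N).
  rewrite mulr_suml; apply: le_trans (ler_norm_sum _ _ _) _.
  by apply: ler_sum => i _; rewrite normrM ler_wpM2l.
have e_le : `|e / N| <= K / N by rewrite normrM normfV (gtr0_norm N_gt0) ler_pM2r ?invr_gt0.
have c0_le : `|c0 * (d / N)| = `|c0| * (d / N).
  by rewrite normrM (ger0_norm (divr_ge0 d_ge0 (ltW N_gt0))).
have -> : (K + d * (`|c0| + \sum_i `|c i|)) / N
    = K / N + `|c0| * (d / N) + (\sum_i `|c i|) * (d / N) by field; rewrite gt_eqF.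
have := ler_normD (e / N + c0 * (d / N)) (\sum_i c i * (x i / N - p i)).
have := ler_normD (e / N) (c0 * (d / N)).
lra.
Qed.

Lemma param_counts_close s : valid_blocks s -> (4 <= size (blockseq s))%N ->
  forall i : 'I_8,
  `|param_counts (blockseq s) i / ((size (blockseq s))%:R - 3) - params R s i|
    <= 3 / ((size (blockseq s))%:R - 3).
Proof.
move=> valid_s; set X := blockseq s => le4X i.
have T_ge4 : 4 <= (size X)%:R :> R by rewrite (ler_nat R 4).
have close (x D : R) : 0 <= x <= D -> (size X)%:R - 3 <= D <= (size X)%:R ->
    `|x / ((size X)%:R - 3) - x / D| <= 3 / ((size X)%:R - 3).
  by move=> x_bounds /andP[? ?]; apply: dist_div_div_le => //; [lra | apply/andP; split; lra].
have count_le_T w : (0 < size w)%N -> count_word X w <= (size X)%:R.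
  move=> w_gt0; apply: le_trans (count_word_le X w) _.
  by rewrite ler_nat; lia.
have nu_close w : (2 < size w <= 4)%N ->
    `|count_word X w / ((size X)%:R - 3) - nu R X w| <= 3 / ((size X)%:R - 3).
  move=> /andP[w_gt2 w_le4]; rewrite nuE; apply: close.
    by rewrite count_word_ge0 count_word_le.
  have -> : ((size X - size w).+1)%:R = (size X)%:R - (size w)%:R + 1 :> R.
    by rewrite -natr1 natrB //; lia.
  have w_ge3 : 3 <= (size w)%:R :> R by rewrite ler_nat.
  have w_le4' : (size w)%:R <= 4 :> R by rewrite ler_nat.
  by apply/andP; split; lra.
case: i => [[|[|[|[|[|[|[|[|//]]]]]]]] lt_i8]; rewrite /params /param_counts /= -/X;
  try by apply: nu_close.
- rewrite count_word_true; last by apply: leq_trans le4X.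
  apply: close; last by rewrite lexx andbT; lra.
  by rewrite ler0n ler_nat count_size.
- rewrite -(descents_blockseq valid_s) -/X -count_word_true_false; last by apply: leq_trans le4X.
  apply: close; last by rewrite lexx andbT; lra.
  by rewrite count_word_ge0 count_le_T.
Qed.

End Frequencies.

Theorem proposition3p3 (R : realType) :
  exists (b : 4.-tuple bool -> R) (a : 4.-tuple bool -> 'I_8 -> R),
  forall eps : R, 0 < eps ->
  exists T0 : nat,
  forall s : seq (nat * nat), valid_blocks s ->
  (T0 <= size (blockseq s))%N ->
  forall w : 4.-tuple bool,
    `| nu R (blockseq s) w - affine8 (b w) (a w) (params R s) | <= eps.
Proof.
exists (fun w => (affine_coefs R w).1), (fun w i => nth 0 (affine_coefs R w).2 i).
move=> eps eps_gt0.
pose err (w : seq bool) : R :=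
  22 + 3 * (`|(affine_coefs R w).1| + \sum_(i < 8) `|nth 0 (affine_coefs R w).2 i|).
exists (\max_(w : 4.-tuple bool) Num.trunc (err w / eps)).+4 => s valid_s le_T0 w.
set X := blockseq s in le_T0 *.
have le4X : (4 <= size X)%N by apply: leq_trans le_T0.
have T_ge4 : 4 <= (size X)%:R :> R by rewrite (ler_nat R 4).
have N_gt0 : 0 < (size X)%:R - 3 :> R by lra.
have err_lt : err w / eps < (size X)%:R - 3.
  have := truncnS_gt (err w / eps); rewrite -natr1.
  have : (Num.trunc (err w / eps) + 4 <= size X)%N.
    by rewrite addn4; apply: leq_trans le_T0; rewrite !ltnS leq_bigmax.
  by rewrite -(ler_nat R) natrD; lra.
rewrite nuE size_tuple.
have -> : ((size X - 4).+1)%:R = (size X)%:R - 3 :> R by rewrite -natr1 natrB //; lra.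
apply: le_trans (affine_rescale N_gt0 (ler0n R 3) (param_counts_close R valid_s le4X)
  (count_estimate_close4 R le4X (size_tuple w))) _.
rewrite ler_pdivrMr //; rewrite ltr_pdivrMr // mulrC in err_lt.
exact: ltW.
Qed.
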